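(* Let $K$ be finite with $|K|\ge2$, let $f^{\mathcal{W}}:\mathcal{P}^n\to 2^K$ be a voting by committees, and let $i\in N$. Then $S\in V_i$ if and only if there is $k^\star\in K$ such that either (i) $k^\star\in S$ and $i\in\bigcap_{M\in\mathcal{W}_{k^\star}}M$, or (ii) $k^\star\notin S$ and $\{i\}\in\mathcal{W}_{k^\star}$.
   Context: $N=\{1,\dots,n\}$, $n\ge2$; alternatives are subsets of $K$; $\mathcal{P}$ all strict linear orders on $2^K$; $t(P_i)$ the top of $P_i$. A committee for $k$ is a non-empty set $\mathcal{W}_k$ of non-empty subsets of $N$ closed under supersets. $f^{\mathcal{W}}$: $k\in f^{\mathcal{W}}(P)$ iff $\{j\in N:k\in t(P_j)\}\in\mathcal{W}_k$. Option set $O(P_i)=\{f^{\mathcal{W}}(P_i,P_{-i}):P_{-i}\in\mathcal{P}^{n-1}\}$. Agent $i$ vetoes $S\in 2^K$ via $P_i$ if $S\notin O(P_i)$; $V_i$ is the set of alternatives $i$ vetoes via some preference. *)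

From mathcomp Require Import all_boot.
Set Implicit Arguments. Unset Strict Implicit. Unset Printing Implicit Defensive.

(* A (strict) preference: a strict linear order on 2^K.
   prel S T means "S is strictly preferred to T". *)
Record pref (K : finType) := Pref {
  prel : rel {set K};
  prel_irr : irreflexive prel;
  prel_trans : transitive prel;
  prel_total : forall S T, S != T -> prel S T || prel T S
}.

(* top t(P): the unique alternative preferred to every other one
   (exists for any strict linear order on the finite set 2^K). *)
Definition top (K : finType) (P : pref K) : {set K} :=
  odflt set0 [pick S : {set K} | [forall T : {set K}, (T != S) ==> prel P S T]].

Definition profile (n : nat) (K : finType) := 'I_n -> pref K.

Definition committee (n : nat) (W : {set {set 'I_n}}) : Prop :=
  W != set0 /\ (forall M, M \in W -> M != set0) /\
  (forall M M' : {set 'I_n}, M \in W -> M \subset M' -> M' \in W).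

Definition vbc (n : nat) (K : finType) (W : K -> {set {set 'I_n}})
  (P : profile n K) : {set K} :=
  [set k | [set j | k \in top (P j)] \in W k].

Definition upd (n : nat) (K : finType) (P : profile n K) (i : 'I_n) (Pi : pref K)
  : profile n K := fun j => if j == i then Pi else P j.

Definition option_set (n : nat) (K : finType) (W : K -> {set {set 'I_n}})
  (i : 'I_n) (Pi : pref K) : {set K} -> Prop :=
  fun S => exists P : profile n K, S = vbc W (upd P i Pi).

Definition vetoes (n : nat) (K : finType) (W : K -> {set {set 'I_n}})
  (i : 'I_n) (Pi : pref K) (S : {set K}) : Prop :=
  ~ option_set W i Pi S.

Definition veto_set (n : nat) (K : finType) (W : K -> {set {set 'I_n}})
  (i : 'I_n) : {set K} -> Prop :=
  fun S => exists Pi : pref K, vetoes W i Pi S.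

From mathcomp Require Import all_boot.
Set Implicit Arguments. Unset Strict Implicit. Unset Printing Implicit Defensive.

(* Agent i's preference matters only through its top t(P_i), and the other
   agents can realise, independently for every k, any coalition C_k that
   contains i exactly when k is in t(P_i).  Hence S is outside O(P_i) iff for
   some k no coalition with the prescribed membership of i has the prescribed
   membership in W_k.  For a committee this happens only for k in S \ t(P_i)
   with i in every winning coalition, or for k in t(P_i) \ S with {i} winning;
   taking t(P_i) to be the complement of S realises either obstruction. *)

Section RankPreference.
Variables (K : finType) (r : {set K} -> nat).
Hypothesis r_inj : injective r.

Definition rank_rel : rel {set K} := fun S U => r S < r U.

Lemma rank_rel_irr : irreflexive rank_rel.
Proof. by move=> S; apply: ltnn. Qed.

Lemma rank_rel_trans : transitive rank_rel.
Proof. by move=> U S V; apply: ltn_trans. Qed.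

Lemma rank_rel_total S U : S != U -> rank_rel S U || rank_rel U S.
Proof. by rewrite /rank_rel -neq_ltn (inj_eq r_inj). Qed.

Definition rank_pref : pref K := Pref rank_rel_irr rank_rel_trans rank_rel_total.

End RankPreference.

Lemma top_eq (K : finType) (P : pref K) (T : {set K}) :
  (forall U, U != T -> prel P T U) -> top P = T.
Proof.
move=> T_best; rewrite /top; case: pickP => [S /forall_inP S_best | none] /=.
  apply/eqP; apply: contraT => nST.
  have nTS : T != S by rewrite eq_sym.
  have := prel_trans (S_best T nTS) (T_best S nST).
  by rewrite prel_irr.
by move: (none T) => /negbT/negP[]; apply/forall_inP.
Qed.

Section PrefWithTop.
Variables (K : finType) (T : {set K}).

Definition top_rank (S : {set K}) : nat :=
  if S == T then 0 else (enum_rank S).+1.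

Lemma top_rank_inj : injective top_rank.
Proof.
move=> S U; rewrite /top_rank.
by case: eqP => [->|_]; case: eqP => [->|_] // [] /val_inj/enum_rank_inj.
Qed.

Definition pref_top : pref K := rank_pref top_rank_inj.

Lemma top_pref_top : top pref_top = T.
Proof. by apply: top_eq => U nUT; rewrite /= /rank_rel /top_rank eqxx (negbTE nUT). Qed.

End PrefWithTop.

Definition coalition (n : nat) (K : finType) (P : profile n K) (k : K) : {set 'I_n} :=
  [set j | k \in top (P j)].

Lemma in_vbc (n : nat) (K : finType) (W : K -> {set {set 'I_n}}) (P : profile n K) k :
  (k \in vbc W P) = (coalition P k \in W k).
Proof. by rewrite inE. Qed.

Definition realizable (n : nat) (i : 'I_n) (W : {set {set 'I_n}}) (b c : bool) : bool :=
  [exists C : {set 'I_n}, ((i \in C) == b) && ((C \in W) == c)].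

Lemma option_setP (n : nat) (K : finType) (W : K -> {set {set 'I_n}}) (i : 'I_n)
    (Pi : pref K) (S : {set K}) :
  option_set W i Pi S <-> [forall k, realizable i (W k) (k \in top Pi) (k \in S)].
Proof.
split=> [[P ->] | /forallP realS].
  apply/forallP => k; apply/existsP; exists (coalition (upd P i Pi) k).
  by rewrite in_vbc inE /upd eqxx !eqxx.
have [C CP] : exists C : K -> {set 'I_n}, forall k,
    ((i \in C k) == (k \in top Pi)) && ((C k \in W k) == (k \in S)).
  exact: fin_all_exists (fun k => existsP (realS k)).
exists (fun j => pref_top [set k | j \in C k]); apply/setP => k.
rewrite in_vbc; set P := upd _ i Pi.
have -> : coalition P k = C k.
  apply/setP => j; rewrite !inE /P /upd.
  case: eqP => [->|_]; last by rewrite top_pref_top inE.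
  by case/andP: (CP k) => /eqP.
by case/andP: (CP k) => _ /eqP.
Qed.

Lemma vetoesP (n : nat) (K : finType) (W : K -> {set {set 'I_n}}) (i : 'I_n)
    (Pi : pref K) (S : {set K}) :
  vetoes W i Pi S <-> [exists k, ~~ realizable i (W k) (k \in top Pi) (k \in S)].
Proof.
rewrite -negb_forall; split=> [notO | /negP notR /option_setP //].
by apply/negP => /option_setP.
Qed.

Lemma committee_unrealizableE (n : nat) (W : {set {set 'I_n}}) (i : 'I_n) (b c : bool) :
  committee W ->
  ~~ realizable i W b c =
    (c && ~~ b && [forall M in W, i \in M]) || (b && ~~ c && ([set i] \in W)).
Proof.
case=> /set0Pn [M0 M0W] [nonempty up_closed].
have setT_W : [set: 'I_n] \in W by apply: up_closed M0W (subsetT M0).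
have set0_notW : set0 \notin W by apply/negP => /nonempty; rewrite eqxx.
rewrite /realizable negb_exists.
case: b; case: c; rewrite /=.
- apply/negbTE; rewrite negb_forall; apply/existsP.
  by exists setT; rewrite in_setT setT_W.
- apply/forallP/idP => [/(_ [set i]) | iW C]; first by rewrite set11 /= eqbF_neg negbK.
  rewrite eqb_id eqbF_neg negb_and negbK -implybE; apply/implyP => iC.
  by apply: up_closed iW _; rewrite sub1set.
- rewrite orbF; apply: eq_forallb => C.
  by rewrite eqb_id eqbF_neg negb_and negbK orbC implybE.
- apply/negbTE; rewrite negb_forall; apply/existsP.
  by exists set0; rewrite in_set0 (negbTE set0_notW).
Qed.

Theorem lemma3 (n : nat) (K : finType) (W : K -> {set {set 'I_n}}) (i : 'I_n)
  (S : {set K}) :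
  2 <= n -> 2 <= #|K| -> (forall k, committee (W k)) ->
  (veto_set W i S <->
   exists kstar : K,
     (kstar \in S /\ (forall M, M \in W kstar -> i \in M)) \/
     (kstar \notin S /\ [set i] \in W kstar)).
Proof.
move=> _ _ committeeW; split.
  move=> [Pi /vetoesP /existsP [k]]; rewrite committee_unrealizableE //.
  case/orP => [/andP [/andP [kS _] /forall_inP iW] | /andP [/andP [_ kS] iW]].
    by exists k; left.
  by exists k; right.
move=> [k kP]; exists (pref_top (~: S)); apply/vetoesP/existsP; exists k.
rewrite committee_unrealizableE // top_pref_top inE.
by case: kP => [[-> /forall_inP ->] | [/negbTE -> ->]].
Qed.
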